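(* Let $G$ be a graph of order $n\ge 4$ with no isolated vertices. Then $G$ is a galaxy if and only if $b_{OCD}(G)=|E(G)|$.
   Context: A galaxy is a forest in which every connected component is a star $K_{1,r}$ with $r\ge 1$. A set $S\subseteq V$ is a dominating set of a graph $G=(V,E)$ if every vertex not in $S$ is adjacent to a vertex of $S$. A set $\tilde D\subseteq V$ is an outer-connected dominating set of $G$ if $\tilde D$ is dominating and the induced subgraph $G[V\setminus\tilde D]$ is connected (the empty graph counts as connected). $\tilde\gamma_c(G)$ is the minimum size of an outer-connected dominating set. For a graph $G$ without isolated vertices, the outer-connected bondage number $b_{OCD}(G)$ is the minimum number of edges whose removal from $G$ yields a graph $G'$ with $\tilde\gamma_c(G')>\tilde\gamma_c(G)$. *)

(* A simple graph on a finite vertex type T is given by its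
   edge set E : {set {set T}}, every edge being a 2-element subset of T. *)
From mathcomp Require Import all_boot.
Set Implicit Arguments. Unset Strict Implicit. Unset Printing Implicit Defensive.

Section Graphs.
Variable T : finType.
Implicit Types (E F : {set {set T}}) (S D U C : {set T}).

Definition simple_edges E : Prop := forall e, e \in E -> #|e| = 2.

Definition adj E : rel T := fun x y => (x != y) && ([set x; y] \in E).

Definition no_isolated E : Prop := forall x, exists y, adj E x y.

Definition dominating E S : bool :=
  [forall x, (x \notin S) ==> [exists y in S, adj E x y]].

(* the induced subgraph G[U] is connected (empty graph counts as connected) *)
Definition induced_connected E U : bool :=
  [forall x in U, forall y in U,
     connect (fun a b => [&& a \in U, b \in U & adj E a b]) x y].

Definition ocd E D : bool := dominating E D && induced_connected E (~: D).

(* outer-connected domination number; V itself is always an ocd set, so the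
   initial value #|T| does not affect the minimum *)
Definition gamma_oc E : nat := \big[minn/#|T|]_(D : {set T} | ocd E D) #|D|.

Definition is_bOCD E (k : nat) : Prop :=
  (exists2 F : {set {set T}}, F \subset E & (#|F| = k /\ gamma_oc E < gamma_oc (E :\: F)))
  /\ (forall F : {set {set T}}, F \subset E -> gamma_oc E < gamma_oc (E :\: F) -> k <= #|F|).

Definition is_star E C : Prop :=
  2 <= #|C| /\
  exists2 c, c \in C & forall x y, x \in C -> y \in C ->
     adj E x y = ((x == c) && (y != c)) || ((y == c) && (x != c)).

(* galaxy: every connected component is a star K_{1,r}, r >= 1
   (such a graph is automatically a forest) *)
Definition galaxy E : Prop :=
  forall x, is_star E [set y | connect (adj E) x y].

End Graphs.

From mathcomp Require Import all_boot.
From mathcomp Require Import zify.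
Set Implicit Arguments. Unset Strict Implicit. Unset Printing Implicit Defensive.

(* Call an edge pendant if one of its endpoints is a leaf. Without isolated
   vertices, G is a galaxy exactly when all its edges are pendant.
   Any graph with an edge uv has gamma <= n - 1 (take V - u), and if all edges
   are pendant then gamma >= n - 1, since two adjacent vertices outside an
   ocd set D would leave the leaf among them undominated.
   So for a galaxy gamma = n - 1, and an edge removal increases gamma only
   when no edge survives (gamma of the edgeless graph is n): b_OCD = |E|.
   Conversely, if some edge ab has further neighbours z of a and w of b,
   then V - {a, b} is an ocd set, so gamma <= n - 2, while deleting all edges
   but ab leaves a graph with gamma = n - 1: b_OCD <= |E| - 1. *)

Lemma setDD1 (T : finType) (A : {set T}) x : x \in A -> A :\: (A :\ x) = [set x].
Proof. by move=> Ax; rewrite setDDr setDv set0U; apply/setIidPr; rewrite sub1set. Qed.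

Section OuterConnectedDomination.
Variable T : finType.
Implicit Types (E : {set {set T}}) (D : {set T}).

Lemma adjC E x y : adj E x y = adj E y x.
Proof. by rewrite /adj eq_sym setUC. Qed.

Lemma adj_neq E x y : adj E x y -> x != y.
Proof. by case/andP. Qed.

Lemma gamma_oc_le E D : ocd E D -> gamma_oc E <= #|D|.
Proof.
move=> ocdD; rewrite /gamma_oc -big_filter.
have : D \in [seq D <- index_enum _ | ocd E D].
  by rewrite mem_filter ocdD mem_index_enum.
elim: [seq _ <- _ | _] => // D' s IHs; rewrite in_cons big_cons.
case/orP => [/eqP <-|Ds]; first exact: geq_minl.
exact: leq_trans (geq_minr _ _) (IHs Ds).
Qed.

Lemma gamma_oc_ge E k :
  k <= #|T| -> (forall D, ocd E D -> k <= #|D|) -> k <= gamma_oc E.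
Proof.
move=> kT ocd_ge; apply: (big_ind (fun m => k <= m)) => // a b ka kb.
by rewrite leq_min ka kb.
Qed.

Lemma gamma_oc_le_card E : gamma_oc E <= #|T|.
Proof.
rewrite -cardsT; apply: gamma_oc_le; apply/andP; split.
  by apply/forallP => x; rewrite in_setT.
by apply/forallP => x; rewrite setCT in_set0.
Qed.

Lemma gamma_oc_set0 : gamma_oc (set0 : {set {set T}}) = #|T|.
Proof.
apply/eqP; rewrite eqn_leq gamma_oc_le_card /=.
apply: gamma_oc_ge => // D /andP [/forallP domD _].
rewrite -cardsT; apply/subset_leq_card/subsetP => x _.
apply: contraT => Dx; have /existsP [y /andP [_]] := implyP (domD x) Dx.
by rewrite /adj in_set0 andbF.
Qed.

Lemma gamma_oc_adj E u v : adj E u v -> gamma_oc E <= #|T|.-1.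
Proof.
move=> uv; rewrite -(cardsC1 u); apply: gamma_oc_le; apply/andP; split.
- apply/forallP => x; apply/implyP; rewrite !inE negbK => /eqP ->.
  by apply/existsP; exists v; rewrite !inE eq_sym (adj_neq uv).
- apply/forallP => x; apply/implyP; rewrite setCK inE => /eqP ->.
  by apply/forallP => y; apply/implyP; rewrite inE => /eqP ->.
Qed.

Lemma gamma_oc_internal_edge E u v a b :
  adj E u v -> adj E u a -> a != v -> adj E v b -> b != u ->
  gamma_oc E <= #|T| - 2.
Proof.
move=> uv ua av vb bu; have uv' := adj_neq uv.
have -> : #|T| - 2 = #|~: [set u; v]|.
  by have := cardsC [set u; v]; rewrite cards2 uv'; lia.
apply: gamma_oc_le; apply/andP; split.
- apply/forallP => x; apply/implyP; rewrite !inE negbK.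
  case/orP => /eqP ->; apply/existsP.
  + by exists a; rewrite !inE ua negb_or av eq_sym (adj_neq ua).
  + by exists b; rewrite !inE vb negb_or bu eq_sym (adj_neq vb).
- rewrite setCK; apply/forallP => x; apply/implyP; rewrite in_set2 => ux.
  apply/forallP => y; apply/implyP; rewrite in_set2 => uy.
  case/orP: ux => /eqP ->; case/orP: uy => /eqP ->; rewrite ?connect0 //;
    by apply: connect1; rewrite !in_set2 !eqxx ?orbT //= ?uv // adjC uv.
Qed.

Definition pendant E a b : bool := [forall z, adj E a z ==> (z == b)].

Definition pendant_edges E : Prop :=
  forall a b, adj E a b -> pendant E a b || pendant E b a.

Lemma pendantP E a b : reflect (forall z, adj E a z -> z = b) (pendant E a b).
Proof.
apply: (iffP forallP) => [ab z az | ab z]; first exact/eqP/(implyP (ab z)).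
by apply/implyP => /ab ->.
Qed.

Lemma dominating_pendant E D a b :
  dominating E D -> pendant E a b -> (a \in D) || (b \in D).
Proof.
move=> /forallP domD /pendantP ab; apply/norP => -[aD bD].
have /existsP [y /andP [Dy /ab yb]] := implyP (domD a) aD.
by rewrite yb (negbTE bD) in Dy.
Qed.

Lemma induced_connected_adj E U x y :
  induced_connected E U -> x \in U -> y \in U -> x != y ->
  exists2 z, z \in U & adj E x z.
Proof.
move=> /forallP /(_ x) /implyP connU Ux Uy.
move: (forallP (connU Ux) y); rewrite Uy => /connectP [[|z p] /= xp ->].
  by rewrite eqxx.
by case/andP: xp => /and3P [_ Uz xz] _ _; exists z.
Qed.

Lemma pendant_edges_cardC_ocd E D : pendant_edges E -> ocd E D -> #|~: D| <= 1.
Proof.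
move=> pendE /andP [domD connD]; apply/card_le1_eqP => x y Cx Cy.
apply/eqP; rewrite eq_sym; apply: contraT => xy.
have [z Cz xz] := induced_connected_adj connD Cx Cy xy.
move: Cx Cz; rewrite !in_setC.
by case/orP: (pendE x z xz) => /(dominating_pendant domD) /orP [] ->.
Qed.

Lemma gamma_oc_pendant_edges E : pendant_edges E -> #|T|.-1 <= gamma_oc E.
Proof.
move=> pendE; apply: gamma_oc_ge => [|D ocdD]; first exact: leq_pred.
by have := cardsC D; have := pendant_edges_cardC_ocd pendE ocdD; lia.
Qed.

Lemma galaxy_pendant_edges E : galaxy E -> pendant_edges E.
Proof.
move=> galE a b ab; have [_ [c _ starC]] := galE a.
set C := [set y | connect (adj E) a y] in starC.
have C_adj x y : x \in C -> adj E x y -> y \in C.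
  by rewrite !inE => ax xy; apply: connect_trans ax (connect1 xy).
have leaf x : x \in C -> x != c -> pendant E x c.
  move=> Cx xc; apply/pendantP => y xy.
  move: (starC x y Cx (C_adj x y Cx xy)).
  by rewrite xy (negbTE xc) /= andbT => /esym/eqP.
have Ca : a \in C by rewrite inE connect0.
have Cb := C_adj a b Ca ab.
case: (eqVneq a c) => [ac|ac].
  by rewrite ac leaf ?orbT // -ac eq_sym (adj_neq ab).
by rewrite {1}(pendantP _ _ _ (leaf a Ca ac) b ab) leaf.
Qed.

Lemma pendant_edges_leaves E a b w : pendant_edges E ->
  adj E a b -> pendant E a b -> adj E b w -> pendant E w b.
Proof.
move=> pendE ab pab bw; case/orP: (pendE b w bw) => // /pendantP bleaf.
by rewrite -(bleaf a) // adjC.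
Qed.

Lemma pendant_edges_component_star E a b x : pendant_edges E ->
  adj E a b -> pendant E a b -> (x == b) || adj E b x ->
  is_star E [set y | connect (adj E) x y].
Proof.
move=> pendE ab pab bx.
have leaf w z : adj E b w -> adj E w z -> z = b.
  by move=> bw; apply/pendantP/(pendant_edges_leaves pendE ab pab bw).
have closedN : closed (adj E) [pred y | (y == b) || adj E b y].
  suff N_adj y z : adj E y z -> (y == b) || adj E b y -> (z == b) || adj E b z.
    by move=> y z yz; apply/idP/idP; apply: N_adj; rewrite // adjC.
  by move=> yz /orP [/eqP <-|ny]; rewrite ?yz ?orbT // (leaf y z ny yz) eqxx.
have -> : [set y | connect (adj E) x y] = [set y | (y == b) || adj E b y].
  apply/setP => y; rewrite !inE; apply/idP/idP => [xy|Ny].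
    by have := closed_connect closedN xy; rewrite !inE /= bx => <-.
  have N_connect z : (z == b) || adj E b z -> connect (adj E) b z.
    by case/orP => [/eqP ->|/connect1].
  apply: connect_trans (N_connect y Ny).
  by rewrite (sym_connect_sym (adjC E)) N_connect.
split.
  apply: (@leq_trans #|[set a; b]|); first by rewrite cards2 (adj_neq ab).
  apply/subset_leq_card/subsetP => y.
  by rewrite !inE => /orP [] /eqP ->; rewrite ?eqxx // adjC ab orbT.
exists b => [|y z]; rewrite !inE ?eqxx //.
case: (eqVneq y b) => [->|yb]; case: (eqVneq z b) => [->|zb] //=.
- by move=> _ _; rewrite /adj eqxx.
- by move=> b_y _; rewrite adjC.
- by move=> b_y _; apply/negP => /(leaf y z b_y) /eqP; rewrite (negbTE zb).
Qed.

Lemma galaxyP E : no_isolated E -> galaxy E <-> pendant_edges E.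
Proof.
move=> noisoE; split; first exact: galaxy_pendant_edges.
move=> pendE x; have [y xy] := noisoE x.
case/orP: (pendE x y xy) => [pxy|pyx].
  by apply: (pendant_edges_component_star pendE xy pxy); rewrite adjC xy orbT.
by apply: (pendant_edges_component_star pendE _ pyx); rewrite ?eqxx // adjC.
Qed.

Lemma pendant_edges_set1 e : pendant_edges [set e].
Proof.
move=> x y /andP [_ /set1P xye]; apply/orP; left.
apply/pendantP => z /andP [xz /set1P]; rewrite -xye => /setP /(_ z).
by rewrite !in_set2 eqxx orbT eq_sym (negbTE xz) => /esym/eqP.
Qed.

Lemma simple_edges_adj E e : simple_edges E -> e \in E -> exists u v, adj E u v.
Proof.
move=> simE Ee; have /cards2P [u [v [uv def_e]]] : #|e| == 2 by rewrite simE.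
by exists u, v; rewrite /adj uv -def_e.
Qed.

Lemma pendant_edges_bOCD E u v :
  simple_edges E -> pendant_edges E -> adj E u v -> is_bOCD E #|E|.
Proof.
move=> simE pendE uv.
have gammaE : gamma_oc E = #|T|.-1.
  by apply/eqP; rewrite eqn_leq (gamma_oc_adj uv) gamma_oc_pendant_edges.
split.
  exists E => //; split => //; rewrite setDv gamma_oc_set0 gammaE prednK //.
  by apply/card_gt0P; exists u.
move=> F FE; rewrite gammaE; apply: contraTT; rewrite -ltnNge => ltFE.
have [EF0|[e EFe]] := set_0Vmem (E :\: F).
  by move: ltFE; rewrite ltnNge subset_leq_card // -setD_eq0 EF0.
have simEF : simple_edges (E :\: F) by move=> e' /setDP [/simE].
have [x [y xy]] := simple_edges_adj simEF EFe.
by rewrite -leqNgt (gamma_oc_adj xy).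
Qed.

Lemma bOCD_pendant_edges E :
  (forall F : {set {set T}}, F \subset E ->
     gamma_oc E < gamma_oc (E :\: F) -> #|E| <= #|F|) ->
  pendant_edges E.
Proof.
move=> minE a b ab; apply: contraT; rewrite negb_or.
case/andP => /forallPn [z]; rewrite negb_imply => /andP [az zb].
case/forallPn => [w]; rewrite negb_imply => /andP [bw wa].
have Eab : [set a; b] \in E by case/andP: ab.
have lt_gamma : gamma_oc E < gamma_oc (E :\: (E :\ [set a; b])).
  rewrite setDD1 //.
  apply: leq_trans (gamma_oc_pendant_edges (@pendant_edges_set1 _)).
  have := gamma_oc_internal_edge ab az zb bw wa; have := max_card [set a; b].
  by rewrite cards2 (adj_neq ab); lia.
have := minE _ (subD1set E _) lt_gamma.
by rewrite (cardsD1 [set a; b] E) Eab ltnn.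
Qed.

End OuterConnectedDomination.

Theorem mainTheorem11 (T : finType) (E : {set {set T}}) :
  simple_edges E -> 4 <= #|T| -> no_isolated E ->
  (galaxy E <-> is_bOCD E #|E|).
Proof.
move=> simE nT noisoE; rewrite galaxyP //.
have [u _] : exists u, u \in [set: T] by apply/card_gt0P; rewrite cardsT; lia.
have [v uv] := noisoE u.
split=> [pendE | [_ minE]]; first exact: pendant_edges_bOCD simE pendE uv.
exact: bOCD_pendant_edges.
Qed.
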